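(* Let $R$ be an abelian $\star$-ring such that for every $r\in Reg(R)$ and every $y\in R$, whenever $ry$ is idempotent it is a projection and whenever $yr$ is idempotent it is a projection. Then $R$ is $\star$-$r$-clean if and only if $R$ is $\star$-clean.
   Context: Rings are associative with identity; $R$ is abelian if all its idempotents are central. A $\star$-ring is a ring $R$ with a map $\star:R\to R$ satisfying $(x+y)^\star=x^\star+y^\star$, $(xy)^\star=y^\star x^\star$, $(x^\star)^\star=x$. A projection is $p\in R$ with $p^2=p=p^\star$; $P(R)$ denotes the set of projections. $U(R)$ denotes the units and $Reg(R)=\{r\in R: r=ryr \text{ for some } y\in R\}$ the regular elements. $R$ is $\star$-clean if every $x\in R$ can be written $x=u+p$ with $u\in U(R)$, $p\in P(R)$. $R$ is $\star$-$r$-clean if every $x\in R$ can be written $x=r+p$ with $r\in Reg(R)$, $p\in P(R)$. *)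

From mathcomp Require Import all_boot all_algebra.
Set Implicit Arguments. Unset Strict Implicit. Unset Printing Implicit Defensive.
Import GRing.Theory.
Local Open Scope ring_scope.

Definition is_involution (R : pzRingType) (star : R -> R) : Prop :=
  [/\ forall x y : R, star (x + y) = star x + star y,
      forall x y : R, star (x * y) = star y * star x &
      forall x : R, star (star x) = x].

Definition idem_elt (R : pzRingType) (e : R) : Prop := e * e = e.

Definition abelian_ring (R : pzRingType) : Prop :=
  forall e : R, idem_elt e -> forall x : R, e * x = x * e.

Definition projection (R : pzRingType) (star : R -> R) (p : R) : Prop :=
  p * p = p /\ p = star p.

Definition is_unit_elt (R : pzRingType) (u : R) : Prop :=
  exists v : R, u * v = 1 /\ v * u = 1.

Definition is_regular_elt (R : pzRingType) (r : R) : Prop :=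
  exists y : R, r = r * y * r.

Definition star_clean (R : pzRingType) (star : R -> R) : Prop :=
  forall x : R, exists u p : R, is_unit_elt u /\ projection star p /\ x = u + p.

Definition star_r_clean (R : pzRingType) (star : R -> R) : Prop :=
  forall x : R, exists r p : R, is_regular_elt r /\ projection star p /\ x = r + p.

From mathcomp Require Import all_boot all_algebra.
Set Implicit Arguments. Unset Strict Implicit. Unset Printing Implicit Defensive.
Import GRing.Theory.
Local Open Scope ring_scope.

(* In an abelian ring a regular element r = r y r is a unit of the corner ring
   eR, where e = r y = y r is a central idempotent; by hypothesis e is moreover
   a projection.  Given x = r + p with p a projection, put s = 2p - 1, so that
   s^2 = 1.  Then u = r + s (1 - e) is a unit (its inverse is y e + s (1 - e)),
   q = p e + (1 - p)(1 - e) is a projection, and x = u + q.  The converse holds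
   because units are regular. *)

Definition central (R : pzRingType) (c : R) : Prop := forall x : R, GRing.comm c x.

Section Rings.

Variable R : pzRingType.
Implicit Types (a b e p r s t u y z : R).

Lemma unit_elt_regular u : is_unit_elt u -> is_regular_elt u.
Proof. by case=> v [uv _]; exists v; rewrite uv mul1r. Qed.

Lemma central1 : central (1 : R).
Proof. by move=> x; apply/commr_sym/commr1. Qed.

Lemma centralB a b : central a -> central b -> central (a - b).
Proof. by move=> ca cb x; apply/commr_sym/commrB; apply/commr_sym. Qed.

Lemma regular_idem_mulr r y : r = r * y * r -> idem_elt (r * y).
Proof. by move=> ryr; rewrite /idem_elt mulrA -ryr. Qed.

Lemma regular_idem_mull r y : r = r * y * r -> idem_elt (y * r).
Proof. by move=> ryr; rewrite /idem_elt mulrA -(mulrA y) -mulrA -ryr. Qed.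

Lemma idem_elt_compl e : idem_elt e -> idem_elt (1 - e).
Proof. by move=> ee; rewrite /idem_elt mulrBl mul1r mulrBr mulr1 ee subrr subr0. Qed.

Lemma idem_mul_compl e : idem_elt e -> e * (1 - e) = 0.
Proof. by move=> ee; rewrite mulrBr mulr1 ee subrr. Qed.

Lemma idem_compl_mul e : idem_elt e -> (1 - e) * e = 0.
Proof. by move=> ee; rewrite mulrBl mul1r ee subrr. Qed.

Lemma idem_reflection_sqr e : idem_elt e -> (e - (1 - e)) * (e - (1 - e)) = 1.
Proof.
move=> ee; rewrite mulrBl (mulrBr e) (mulrBr (1 - e)) ee idem_elt_compl //.
by rewrite idem_mul_compl // idem_compl_mul // subr0 sub0r opprK addrC subrK.
Qed.

Lemma add_reflection_corners p e :
  (p - (1 - p)) * (1 - e) + (p * e + (1 - p) * (1 - e)) = p.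
Proof.
by rewrite mulrBl [p * e + _]addrC addrA subrK -mulrDr subrK mulr1.
Qed.

Lemma corner_mul_compl e a b s t :
  idem_elt e -> central e -> central t -> s * t = 1 ->
  a * e = a -> b * e = b -> a * b = e ->
  (a + s * (1 - e)) * (b + t * (1 - e)) = 1.
Proof.
move=> ee ce ct st ae be ab.
have a_compl : a * (t * (1 - e)) = 0.
  by rewrite mulrA -(ct a) -mulrA mulrBr mulr1 ae subrr mulr0.
have compl_b : s * (1 - e) * b = 0.
  by rewrite -mulrA mulrBl mul1r (ce b) be subrr mulr0.
have compl_compl : s * (1 - e) * (t * (1 - e)) = 1 - e.
  rewrite -mulrA (mulrA (1 - e)) -(ct (1 - e)) -!mulrA idem_elt_compl //.
  by rewrite mulrA st mul1r.
rewrite mulrDl (mulrDr a) (mulrDr (s * (1 - e))) ab a_compl compl_b compl_compl.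
by rewrite addr0 add0r addrC subrK.
Qed.

Lemma corner_unit_add_compl e r z s t :
  idem_elt e -> central e -> central s -> central t -> s * t = 1 -> t * s = 1 ->
  r * e = r -> z * e = z -> r * z = e -> z * r = e ->
  is_unit_elt (r + s * (1 - e)).
Proof.
move=> ee ce cs ct st ts re ze rz zr.
by exists (z + t * (1 - e)); split; apply: corner_mul_compl.
Qed.

Section Abelian.

Hypothesis abelR : abelian_ring R.

Lemma abelian_regular_comm r y : r = r * y * r -> r * y = y * r.
Proof.
move=> ryr; have ry_idem := regular_idem_mulr ryr; have yr_idem := regular_idem_mull ryr.
have ry_yr : r * y = y * r * (r * y).
  by rewrite {1}ryr -(mulrA r y r) -(abelR yr_idem r) -mulrA.
have yr_ry : y * r = r * y * (y * r).
  by rewrite {1}ryr mulrA -(abelR ry_idem y) -mulrA.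
by rewrite {1}ry_yr -(abelR ry_idem (y * r)) -yr_ry.
Qed.

Lemma abelian_regular_corner r y : r = r * y * r ->
  exists z, [/\ r * (r * y) = r, z * (r * y) = z, r * z = r * y & z * r = r * y].
Proof.
move=> ryr; have ry_idem := regular_idem_mulr ryr.
exists (y * (r * y)); split.
- by rewrite -(abelR ry_idem r) -ryr.
- by rewrite -mulrA ry_idem.
- by rewrite mulrA ry_idem.
- by rewrite -mulrA -ryr (abelian_regular_comm ryr).
Qed.

End Abelian.

End Rings.

Section StarRings.

Variables (R : pzRingType) (star : R -> R).
Hypothesis star_inv : is_involution star.
Implicit Types (a b p q : R).

Lemma starB a b : star (a - b) = star a - star b.
Proof.
case: star_inv => starD _ _.
have star0 : star 0 = 0 by apply: (addrI (star 0)); rewrite -starD !addr0.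
have starN c : star (- c) = - star c.
  by apply: (addrI (star c)); rewrite -starD !subrr.
by rewrite starD starN.
Qed.

Lemma star1 : star 1 = 1.
Proof.
case: star_inv => _ starM starK.
by rewrite -[star 1]mulr1 -{2}(starK 1) -starM mulr1 starK.
Qed.

Lemma projection_compl p : projection star p -> projection star (1 - p).
Proof. by case=> pp sp; split; [exact: idem_elt_compl | rewrite starB star1 -sp]. Qed.

Lemma projection_mul p q :
  projection star p -> projection star q -> p * q = q * p -> projection star (p * q).
Proof.
case: star_inv => _ starM _ [pp sp] [qq sq] pq; split.
  by rewrite -mulrA (mulrA q) -pq -mulrA qq mulrA pp.
by rewrite starM -sp -sq.
Qed.

Lemma projection_add p q :
  projection star p -> projection star q -> p * q = 0 -> q * p = 0 ->
  projection star (p + q).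
Proof.
case: star_inv => starD _ _ [pp sp] [qq sq] pq qp; split.
  by rewrite mulrDl !mulrDr pp qq pq qp addr0 add0r.
by rewrite starD -sp -sq.
Qed.

Lemma projection_corners p e :
  projection star p -> projection star e -> central e ->
  projection star (p * e + (1 - p) * (1 - e)).
Proof.
move=> pP eP ce; have [pp _] := pP; have [ee _] := eP.
have cf : central (1 - e) by apply: centralB => //; apply: central1.
have orth a b c d : central b -> a * c = 0 -> a * b * (c * d) = 0.
  by move=> cb ac; rewrite -mulrA (mulrA b) (cb c) -mulrA mulrA ac mul0r.
apply: projection_add.
- exact: projection_mul pP eP (esym (ce p)).
- by apply: projection_mul (esym (cf _)); apply: projection_compl.
- by apply: orth => //; apply: idem_mul_compl.
- by apply: orth => //; apply: idem_compl_mul.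
Qed.

End StarRings.

Theorem theorem4p17 (R : pzRingType) (star : R -> R) :
  is_involution star ->
  abelian_ring R ->
  (forall r y : R, is_regular_elt r ->
     (idem_elt (r * y) -> projection star (r * y)) /\
     (idem_elt (y * r) -> projection star (y * r))) ->
  (star_r_clean star <-> star_clean star).
Proof.
move=> star_inv abelR proj_reg; split=> [rclean x | clean x]; last first.
  by have [u [p [/unit_elt_regular reg_u [proj_p ->]]]] := clean x; exists u, p.
have [r [p [[y ryr] [proj_p ->]]]] := rclean x.
have ry_idem := regular_idem_mulr ryr.
have proj_ry := (proj_reg r y (ex_intro _ y ryr)).1 ry_idem.
have ce : central (r * y) := abelR _ ry_idem.
have [z [re ze rz zr]] := abelian_regular_corner abelR ryr.
have cs : central (p - (1 - p)).
  have cp : central p := abelR _ proj_p.1.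
  by apply: centralB => //; apply: centralB => //; apply: central1.
have ss := idem_reflection_sqr proj_p.1.
exists (r + (p - (1 - p)) * (1 - r * y)), (p * (r * y) + (1 - p) * (1 - r * y)).
split; [|split].
- exact: (corner_unit_add_compl ry_idem ce cs cs ss ss re ze rz zr).
- exact: (projection_corners star_inv proj_p proj_ry ce).
- by rewrite -addrA add_reflection_corners.
Qed.
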